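(* Let $\mathbf A\in\mathbb C^{m\times n}$, $\mathbf W\in\mathbb C^{n\times m}$, $k=\max\{\operatorname{Ind}(\mathbf A\mathbf W),\operatorname{Ind}(\mathbf W\mathbf A)\}$ and $\operatorname{rank}(\mathbf A\mathbf W)^{k}=r$. Then the $\mathbf W$-weighted Drazin inverse $\mathbf A_{d,W}=(a^{d,W}_{ij})\in\mathbb C^{m\times n}$ satisfies, for all $i=1,\dots,m$ and $j=1,\dots,n$, \[ a^{d,W}_{ij}=\frac{\sum_{\beta\in J_{r,m}\{i\}}\left|\left((\mathbf A\mathbf W)^{k+2}_{.i}(\bar{\mathbf v}^{(k)}_{.j})\right)^{\beta}_{\beta}\right|}{\sum_{\beta\in J_{r,m}}\left|((\mathbf A\mathbf W)^{k+2})^{\beta}_{\beta}\right|} \] and \[ a^{d,W}_{ij}=\frac{\sum_{\alpha\in I_{r,n}\{j\}}\left|\left((\mathbf W\mathbf A)^{k+2}_{j.}(\bar{\mathbf u}^{(k)}_{i.})\right)^{\alpha}_{\alpha}\right|}{\sum_{\alpha\in I_{r,n}}\left|((\mathbf W\mathbf A)^{k+2})^{\alpha}_{\alpha}\right|}, \] where $\bar{\mathbf v}^{(k)}_{.j}$ is the $j$-th column of $(\mathbf A\mathbf W)^{k}\mathbf A$ and $\bar{\mathbf u}^{(k)}_{i.}$ is the $i$-th row of $\mathbf A(\mathbf W\mathbf A)^{k}$.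
   Context: All matrices are complex. For a square $\mathbf M$, $\operatorname{Ind}\mathbf M$ is the smallest nonnegative integer $k$ with $\operatorname{rank}\mathbf M^{k+1}=\operatorname{rank}\mathbf M^{k}$. The $\mathbf W$-weighted Drazin inverse $\mathbf A_{d,W}$ is the unique $\mathbf X\in\mathbb C^{m\times n}$ with $(\mathbf A\mathbf W)^{k+1}\mathbf X\mathbf W=(\mathbf A\mathbf W)^{k}$, $\mathbf X\mathbf W\mathbf A\mathbf W\mathbf X=\mathbf X$, $\mathbf A\mathbf W\mathbf X=\mathbf X\mathbf W\mathbf A$, with $k=\max\{\operatorname{Ind}(\mathbf A\mathbf W),\operatorname{Ind}(\mathbf W\mathbf A)\}$. For a square matrix $\mathbf M$, $\mathbf M_{.i}(\mathbf c)$ (resp. $\mathbf M_{i.}(\mathbf c)$) is obtained from $\mathbf M$ by replacing its $i$-th column (resp. row) by the vector $\mathbf c$. For $1\le k\le p$, $L_{k,p}$ is the set of strictly increasing sequences of $k$ elements of $\{1,\dots,p\}$; $I_{k,p}=J_{k,p}=L_{k,p}$, $I_{k,p}\{i\}=J_{k,p}\{i\}=\{\alpha\in L_{k,p}: i\in\alpha\}$. $\mathbf M^{\alpha}_{\alpha}$ is the principal submatrix indexed by $\alpha$; $|\cdot|$ is the determinant. *)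

From HB Require Import structures.
From mathcomp Require Import all_boot all_order all_algebra.
From mathcomp Require Import reals.
From mathcomp Require Import complex.
Set Implicit Arguments. Unset Strict Implicit. Unset Printing Implicit Defensive.
Import Order.TTheory GRing.Theory Num.Theory.
Local Open Scope ring_scope.

(* Index of a square matrix: smallest k with rank M^(k+1) = rank M^k.
   Such a k always exists with k <= p, so searching in 0..p is exhaustive. *)
Definition mxind (F : fieldType) (p : nat) (M : 'M[F]_p) : nat :=
  find (fun k => \rank (M ^+ k.+1) == \rank (M ^+ k)) (iota 0 p.+1).

Definition wdind (F : fieldType) (m n : nat) (A : 'M[F]_(m, n)) (W : 'M[F]_(n, m)) : nat :=
  maxn (mxind (A *m W)) (mxind (W *m A)).

Definition is_wdrazin (F : fieldType) (m n : nat) (A : 'M[F]_(m, n)) (W : 'M[F]_(n, m))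
  (X : 'M[F]_(m, n)) : Prop :=
  let k := wdind A W in
  [/\ (A *m W) ^+ k.+1 *m X *m W = (A *m W) ^+ k,
      X *m W *m A *m W *m X = X
    & A *m W *m X = X *m W *m A].

Definition colrep (F : fieldType) (p : nat) (M : 'M[F]_p) (i : 'I_p) (c : 'cV[F]_p) : 'M[F]_p :=
  \matrix_(a, b) (if b == i then c a 0 else M a b).

Definition rowrep (F : fieldType) (p : nat) (M : 'M[F]_p) (i : 'I_p) (c : 'rV[F]_p) : 'M[F]_p :=
  \matrix_(a, b) (if a == i then c 0 b else M a b).

Definition pminor (F : fieldType) (p : nat) (M : 'M[F]_p) (b : {set 'I_p}) : F :=
  \det (\matrix_(s < #|b|, t < #|b|) M (enum_val s) (enum_val t)).

From HB Require Import structures.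
From mathcomp Require Import all_boot all_order all_algebra.
From mathcomp Require Import reals complex.
From mathcomp Require Import perm zify.
Import Order.TTheory GRing.Theory Num.Theory.
Local Open Scope ring_scope.
Set Implicit Arguments. Unset Strict Implicit. Unset Printing Implicit Defensive.

(* Let N be a p x p matrix with rank (N^2) = rank N = r.  The coefficient of X^(p-r) in
   det (X + N) is the sum c of the principal r-minors of N, and in the Cramer numerators of
   adj (X + N) (N y) it is the vector x whose entries are the sums of r-minors of N with one
   column replaced by N y that appear in the formula.
   Comparing coefficients of X^(p-r) in (X + N) adj (X + N) = det (X + N) gives N x = c N y,
   because the coefficient of X^(p-r-1) consists of such minors of order r+1, taken in
   matrices of rank at most r.  Moreover c <> 0: for a rank factorization N = C D we have
   X^r det (X + C D) = X^p det (X + D C), and D C is invertible because N^2 = C (D C) D.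
   For N = (AW)^(k+2), which has the rank and the range of (AW)^k, this produces a solution
   of (AW)^(k+2) X = (AW)^k A lying in the range of (AW)^k, and these two conditions
   characterize A_{d,W}.  The row formula is the column formula for A^T and W^T. *)

Section PrincipalMinors.
Variable R : comNzRingType.

Definition principal_minor p (N : 'M[R]_p) (S : {set 'I_p}) : R :=
  \det (\matrix_(s < #|S|, t < #|S|) N (enum_val s) (enum_val t)).

Lemma det_mxsub_inj p q (h : 'I_q -> 'I_p) (N : 'M[R]_p) :
  q = p -> injective h -> \det (mxsub h h N) = \det N.
Proof.
move=> eq_qp; subst q => h_inj; set s := perm h_inj.
have -> : mxsub h h N = row_perm s (col_perm s N).
  by apply/matrixP => i j; rewrite !mxE !permE.
rewrite row_permE col_permE !det_mulmx !det_perm odd_permV.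
by rewrite mulrCA -expr2 sqrr_sign mulr1.
Qed.

Lemma principal_minor_pad p (N : 'M[R]_p) (S : {set 'I_p}) :
  principal_minor N S = \det (\matrix_(a, b) if a \in S then N a b else (a == b)%:R).
Proof.
have notinS (t : 'I_#|~: S|) : enum_val t \in S = false.
  by have := enum_valP t; rewrite inE => /negbTE.
pose h (i : 'I_(#|S| + #|~: S|)) : 'I_p :=
  match split i with inl s => enum_val s | inr t => enum_val t end.
have h_inj : injective h.
  move=> i1 i2; rewrite /h.
  case: split_ordP => [s1 ->|t1 ->]; case: split_ordP => [s2 ->|t2 ->] /= e;
    try by rewrite (enum_val_inj e).
    by have := notinS t2; rewrite -e enum_valP.
  by have := notinS t1; rewrite e enum_valP.
have card_S : (#|S| + #|~: S| = p)%N by rewrite cardsC card_ord.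
rewrite -(det_mxsub_inj _ card_S h_inj).
rewrite (_ : mxsub _ _ _ = block_mx (\matrix_(s < #|S|, t < #|S|) N (enum_val s) (enum_val t))
     (\matrix_(s < #|S|, t < #|~: S|) N (enum_val s) (enum_val t)) 0 1%:M).
  by rewrite det_ublock det1 mulr1.
apply/matrixP => i j; rewrite /mxsub mxE /h.
case: (split_ordP i) => [s ->|t ->]; case: (split_ordP j) => [s' ->|t' ->];
  rewrite ?block_mxEul ?block_mxEur ?block_mxEdl ?block_mxEdr !mxE ?enum_valP ?notinS //.
  by case: eqP => // e; have := notinS t; rewrite e enum_valP.
by rewrite (inj_eq enum_val_inj).
Qed.

Lemma det_diag_add p (x : 'I_p -> R) (N : 'M[R]_p) :
  \det (\matrix_(a, b) ((a == b)%:R * x a + N a b))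
  = \sum_(S : {set 'I_p}) (\prod_(a in ~: S) x a) * principal_minor N S.
Proof.
rewrite (reindex_inj (@setC_inj _)) /=.
under [RHS]eq_bigr => S _ do rewrite setCK principal_minor_pad.
rewrite /determinant.
transitivity (\sum_(s : 'S_p) (-1) ^+ s * \sum_(T : {set 'I_p})
   \prod_a (if a \in T then (a == s a)%:R * x a else N a (s a))).
  apply: eq_bigr => s _; congr (_ * _); rewrite -bigA_distr.
  by apply: eq_bigr => a _; rewrite mxE.
under [LHS]eq_bigr => s _ do rewrite big_distrr /=.
rewrite exchange_big /=; apply: eq_bigr => T _.
rewrite big_distrr /=; apply: eq_bigr => s _.
have prod_if (f g : 'I_p -> R) : \prod_a (if a \in T then f a else g a)
    = \prod_(a in T) f a * \prod_(a | a \notin T) g a.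
  rewrite (bigID (mem T)) /=; congr (_ * _).
    by apply: eq_bigr => a ->.
  by apply: eq_bigr => a /negbTE ->.
have -> : \prod_a (\matrix_(a, b) (if a \in ~: T then N a b else (a == b)%:R)) a (s a)
    = \prod_a (if a \in T then (a == s a)%:R else N a (s a)).
  by apply: eq_bigr => a _; rewrite mxE inE; case: (a \in T).
by rewrite !prod_if big_split /= mulrAC mulrA mulrC.
Qed.

Lemma mul_adj_mxE p q (A : 'M[R]_p) (B : 'M[R]_(p, q)) i j :
  (\adj A *m B) i j = \det (\matrix_(c, d) if d == i then B c j else A c d).
Proof.
rewrite (expand_det_col _ i) mxE; apply: eq_bigr => c _.
rewrite !mxE eqxx mulrC; congr (_ * _).
rewrite /cofactor; congr (_ * \det _); apply/matrixP => a b; rewrite !mxE.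
by rewrite eq_sym (negbTE (neq_lift i b)).
Qed.

Lemma char_poly_mulmxC p q (C : 'M[R]_(p, q)) (D : 'M[R]_(q, p)) :
  'X^q * char_poly (C *m D) = 'X^p * char_poly (D *m C).
Proof.
set CP := map_mx polyC C; set DP := map_mx polyC D.
pose Z : 'M[{poly R}]_(p + q) := block_mx 'X%:M CP DP 1%:M.
pose L1 : 'M[{poly R}]_(p + q) := block_mx 1%:M (- CP) 0 1%:M.
pose L2 : 'M[{poly R}]_(p + q) := block_mx 1%:M 0 (- DP) 'X%:M.
have L1Z : L1 *m Z = block_mx (char_poly_mx (C *m D)) 0 DP 1%:M.
  by rewrite /char_poly_mx mulmx_block !mul1mx !mul0mx !mulmx1 mulNmx addrN !add0r map_mxM.
have L2Z : L2 *m Z = block_mx 'X%:M CP 0 (char_poly_mx (D *m C)).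
  rewrite /char_poly_mx mulmx_block !mul1mx !mul0mx !mulmx1 !addr0 map_mxM !mulNmx.
  by rewrite scalar_mxC addNr addrC.
have := congr1 determinant L2Z.
rewrite det_mulmx det_lblock det1 det_scalar mul1r det_ublock det_scalar => <-.
have := congr1 determinant L1Z.
by rewrite det_mulmx det_ublock !det1 !mul1r det_lblock det1 mulr1 => ->.
Qed.

Lemma adj_char_poly_mxC p (A : 'M[R]_p) :
  \adj (char_poly_mx A) *m map_mx polyC A = map_mx polyC A *m \adj (char_poly_mx A).
Proof.
have := mul_adj_mx (char_poly_mx A); rewrite -[RHS](mul_mx_adj (char_poly_mx A)).
by rewrite {2 4}/char_poly_mx mulmxBr mulmxBl scalar_mxC => /addrI /oppr_inj.
Qed.

End PrincipalMinors.

Section CoefficientExtraction.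
Variable R : nzRingType.

Lemma map_coefp_mul_polyC d m n q (N : 'M[R]_(m, n)) (V : 'M[{poly R}]_(n, q)) :
  map_mx (coefp d) (map_mx polyC N *m V) = N *m map_mx (coefp d) V.
Proof.
apply/matrixP => i j; rewrite !mxE /= coef_sum; apply: eq_bigr => l _.
by rewrite !mxE coefCM.
Qed.

Lemma map_coefp_scaleX d m n (V : 'M[{poly R}]_(m, n)) :
  map_mx (coefp d) ('X *: V) = if d is d'.+1 then map_mx (coefp d') V else 0.
Proof. by apply/matrixP => i j; case: d => [|d]; rewrite !mxE /= coefXM. Qed.

Lemma map_coefp_scale_polyC d m n (a : {poly R}) (B : 'M[R]_(m, n)) :
  map_mx (coefp d) (a *: map_mx polyC B) = a`_d *: B.
Proof. by apply/matrixP => i j; rewrite !mxE /= coefMC. Qed.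

End CoefficientExtraction.

Section MinorSums.
Variable F : fieldType.

Lemma principal_minor_map_polyC p (N : 'M[F]_p) S :
  principal_minor (map_mx polyC N) S = (pminor N S)%:P.
Proof.
by rewrite /principal_minor -det_map_mx; congr (\det _); apply/matrixP => s t; rewrite !mxE.
Qed.

Lemma char_poly_mx_opp p (N : 'M[F]_p) : char_poly_mx (- N) = 'X%:M + map_mx polyC N.
Proof. by rewrite /char_poly_mx map_mxN opprK. Qed.

Lemma char_poly_opp p (N : 'M[F]_p) :
  char_poly (- N) = \sum_(S : {set 'I_p}) 'X^#|~: S| * (pminor N S)%:P.
Proof.
rewrite /char_poly (_ : char_poly_mx _ = \matrix_(a, b) ((a == b)%:R * 'X + map_mx polyC N a b)).
  by rewrite det_diag_add; apply: eq_bigr => S _; rewrite prodr_const principal_minor_map_polyC.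
by apply/matrixP => a b; rewrite char_poly_mx_opp !mxE mulr_natl.
Qed.

Lemma mul_adj_char_poly_mx_opp p q (N : 'M[F]_p) (B : 'M[F]_(p, q)) i j :
  (\adj (char_poly_mx (- N)) *m map_mx polyC B) i j
  = \sum_(S : {set 'I_p} | i \in S) 'X^#|~: S| * (pminor (colrep N i (col j B)) S)%:P.
Proof.
rewrite mul_adj_mxE (_ : \matrix_(c, d) _ = \matrix_(c, d)
    ((c == d)%:R * (if c == i then 0 else 'X) + map_mx polyC (colrep N i (col j B)) c d)).
  rewrite det_diag_add [RHS]big_mkcond /=; apply: eq_bigr => S _.
  rewrite principal_minor_map_polyC; case: ifP => iS.
    rewrite -prodr_const; congr (_ * _); apply: eq_bigr => c.
    by rewrite inE; case: eqP => // ->; rewrite iS.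
  by rewrite (bigD1 i) /= ?inE ?iS // eqxx !mul0r.
apply/matrixP => c d; rewrite char_poly_mx_opp !mxE.
case: (eqVneq d i) => [->|di]; first by case: eqP => _; rewrite ?mulr0 ?mul0r add0r.
case: (eqVneq c d) => [eq_cd|cd]; last by rewrite mul0r add0r.
by rewrite -eq_cd in di; rewrite (negbTE di) mul1r.
Qed.

Lemma coef_sum_XnC (I : finType) (P : pred I) (e : I -> nat) (a : I -> F) d :
  (\sum_(S | P S) 'X^(e S) * (a S)%:P)`_d = \sum_(S | P S && (e S == d)) a S.
Proof.
rewrite coef_sum big_mkcondr /=; apply: eq_bigr => S _.
by rewrite mulrC coefCM coefXn eq_sym; case: eqP; rewrite ?mulr1 ?mulr0.
Qed.

Lemma cardsC_eq_sub p (S : {set 'I_p}) r : (r <= p)%N -> (#|~: S| == p - r)%N = (#|S| == r).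
Proof. by move=> le_rp; have := cardsC S; rewrite card_ord => cS; apply/eqP/eqP; lia. Qed.

Definition pminor_sum p (N : 'M[F]_p) r : F :=
  \sum_(S : {set 'I_p} | #|S| == r) pminor N S.

Definition colrep_minor_mx p q (N : 'M[F]_p) r (B : 'M[F]_(p, q)) : 'M[F]_(p, q) :=
  \matrix_(i, j) \sum_(S : {set 'I_p} | (#|S| == r) && (i \in S)) pminor (colrep N i (col j B)) S.

Lemma coef_char_poly_opp p (N : 'M[F]_p) r :
  (r <= p)%N -> (char_poly (- N))`_(p - r) = pminor_sum N r.
Proof.
move=> le_rp; rewrite char_poly_opp (coef_sum_XnC xpredT).
by apply: eq_bigl => S /=; rewrite cardsC_eq_sub.
Qed.

Lemma coef_mul_adj_char_poly_mx_opp p q (N : 'M[F]_p) r (B : 'M[F]_(p, q)) :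
  (r <= p)%N ->
  map_mx (coefp (p - r)) (\adj (char_poly_mx (- N)) *m map_mx polyC B)
  = colrep_minor_mx N r B.
Proof.
move=> le_rp; apply/matrixP => i j.
rewrite [LHS]mxE /= mul_adj_char_poly_mx_opp coef_sum_XnC [RHS]mxE.
by apply: eq_bigl => S; rewrite cardsC_eq_sub // andbC.
Qed.

End MinorSums.

Section MinorSumIdentities.
Variable F : fieldType.

Lemma mxrank_mxsub m n m' n' (f : 'I_m' -> 'I_m) (g : 'I_n' -> 'I_n) (A : 'M[F]_(m, n)) :
  (\rank (mxsub f g A) <= \rank A)%N.
Proof.
rewrite mxsubrc (leq_trans (mxrankS (rowsub_sub _ _))) //.
by rewrite -mxrank_tr -[X in (_ <= X)%N]mxrank_tr trmx_mxsub mxrankS ?rowsub_sub.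
Qed.

Lemma pminor_eq0 p (K : 'M[F]_p) (S : {set 'I_p}) : (\rank K < #|S|)%N -> pminor K S = 0.
Proof.
move=> lt_KS; apply/eqP; apply: contraTT lt_KS => det_neq0; rewrite -leqNgt.
have : row_free (mxsub (@enum_val _ (mem S)) (@enum_val _ (mem S)) K).
  by rewrite row_free_unit unitmxE unitfE; exact: det_neq0.
by move/eqP <-; apply: mxrank_mxsub.
Qed.

Lemma colrep_mulmx p (N : 'M[F]_p) i (v : 'cV[F]_p) :
  colrep N i (N *m v) = N *m colrep 1%:M i v.
Proof.
apply/matrixP => c d; rewrite !mxE; case: eqP => [->|/eqP di].
  by apply: eq_bigr => e _; rewrite !mxE eqxx.
rewrite (bigD1 d) //= big1 ?addr0; first by rewrite !mxE (negbTE di) eqxx mulr1.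
by move=> e /negbTE ed; rewrite !mxE (negbTE di) ed mulr0.
Qed.

Lemma colrep_minor_mx_eq0 p q (N : 'M[F]_p) r (Y : 'M[F]_(p, q)) :
  (\rank N < r)%N -> colrep_minor_mx N r (N *m Y) = 0.
Proof.
move=> lt_Nr; apply/matrixP => i j; rewrite !mxE big1 // => S /andP [/eqP cardS _].
apply: pminor_eq0; rewrite cardS (leq_ltn_trans _ lt_Nr) //.
by rewrite colE -mulmxA -colE colrep_mulmx mxrankM_maxl.
Qed.

Variables (p : nat) (N : 'M[F]_p).
Local Notation r := (\rank N).
Local Notation adjN := (\adj (char_poly_mx (- N))).

Lemma mulmx_colrep_minor_mx q (Y : 'M[F]_(p, q)) :
  N *m colrep_minor_mx N r (N *m Y) = pminor_sum N r *: (N *m Y).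
Proof.
have le_rp : (r <= p)%N := rank_leq_row N.
set B := N *m Y; set U := adjN *m map_mx polyC B.
have charU : char_poly_mx (- N) *m U = char_poly (- N) *: map_mx polyC B.
  by rewrite mulmxA mul_mx_adj mul_scalar_mx.
have coefXU : map_mx (coefp (p - r)) ('X *: U) = 0.
  rewrite map_coefp_scaleX; case E: (p - r)%N => [//|d].
  rewrite (_ : d = p - r.+1)%N; last by lia.
  by rewrite coef_mul_adj_char_poly_mx_opp ?colrep_minor_mx_eq0 //; lia.
have := congr1 (map_mx (coefp (p - r))) charU.
rewrite char_poly_mx_opp mulmxDl mul_scalar_mx map_mxD coefXU add0r.
by rewrite map_coefp_mul_polyC map_coefp_scale_polyC coef_char_poly_opp
  ?coef_mul_adj_char_poly_mx_opp.
Qed.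

Lemma colrep_minor_mx_range q (Y : 'M[F]_(p, q)) :
  colrep_minor_mx N r (N *m Y) = N *m map_mx (coefp (p - r)) (adjN *m map_mx polyC Y).
Proof.
have adjNC : adjN *m map_mx polyC N = map_mx polyC N *m adjN.
  by apply: oppr_inj; rewrite -mulmxN -mulNmx -!map_mxN adj_char_poly_mxC.
rewrite -coef_mul_adj_char_poly_mx_opp ?rank_leq_row //.
by rewrite map_mxM mulmxA adjNC -mulmxA map_coefp_mul_polyC.
Qed.

Lemma pminor_sum_rank_neq0 : \rank (N *m N) = r -> pminor_sum N r != 0.
Proof.
move=> rankN2; set C := col_base N; set D := row_base N.
have le_rp : (r <= p)%N := rank_leq_row N.
have DC_unit : D *m C \in unitmx.
  have N2 : N *m N = C *m (D *m C) *m D.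
    by rewrite -[LHS](congr2 mulmx (mulmx_base N) (mulmx_base N)) !mulmxA.
  rewrite -row_free_unit /row_free eqn_leq rank_leq_row /= -[X in (X <= _)%N]rankN2 N2.
  exact: leq_trans (mxrankM_maxl _ _) (mxrankM_maxr _ _).
rewrite -coef_char_poly_opp //.
have := congr1 (coefp p) (char_poly_mulmxC (- C) D).
rewrite /= !coefXnM ltnn subnn ltnNge le_rp /= mulNmx mulmx_base => ->.
rewrite char_poly_det mulmxN -scaleN1r detZ mulrA -exprMn mulrNN mulr1 expr1n mul1r.
by rewrite -unitfE -unitmxE.
Qed.

End MinorSumIdentities.

Section MatrixPowers.
Variable R : comNzRingType.

Lemma trmx_exp p (M : 'M[R]_p) k : (M ^+ k)^T = M^T ^+ k.
Proof.
elim: k => [|k IH]; first by rewrite !expr0 trmx1.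
by rewrite exprSr exprS -!mulmxE trmx_mul IH.
Qed.

Lemma mulmx_exprD p (M : 'M[R]_p) i j : M ^+ i *m M ^+ j = M ^+ (i + j).
Proof. by rewrite exprD mulmxE. Qed.

Lemma mulmx_exprS p (M : 'M[R]_p) j : M ^+ j *m M = M ^+ j.+1.
Proof. by rewrite exprSr mulmxE. Qed.

Lemma mulmx_exprSl p (M : 'M[R]_p) j : M *m M ^+ j = M ^+ j.+1.
Proof. by rewrite exprS mulmxE. Qed.

Lemma expr_mulmx_push m n (A : 'M[R]_(m, n)) (W : 'M[R]_(n, m)) j :
  (A *m W) ^+ j *m A = A *m (W *m A) ^+ j.
Proof.
elim: j => [|j IH]; first by rewrite !expr0 mul1mx mulmx1.
by rewrite -!mulmx_exprS [in RHS]mulmxA -IH !mulmxA.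
Qed.

Lemma exprS_mulmx_push m n (A : 'M[R]_(m, n)) (W : 'M[R]_(n, m)) j :
  (A *m W) ^+ j.+1 = A *m (W *m A) ^+ j *m W.
Proof. by rewrite -mulmx_exprS mulmxA expr_mulmx_push. Qed.

Lemma sandwich_expr p q (B : 'M[R]_p) (C : 'M[R]_q) (X : 'M[R]_(p, q)) :
  X = B *m X *m C -> forall j, X = B ^+ j *m X *m C ^+ j.
Proof.
move=> BXC; elim=> [|j IH]; first by rewrite !expr0 mul1mx mulmx1.
by rewrite {1}IH {1}BXC -mulmx_exprS -mulmx_exprSl !mulmxA.
Qed.

End MatrixPowers.

Section MatrixIndex.
Variables (F : fieldType) (p : nat) (M : 'M[F]_p).

Lemma exprS_submx k : (M ^+ k.+1 <= M ^+ k)%MS.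
Proof. by rewrite -mulmx_exprSl submxMl. Qed.

Lemma mxrank_exprS_mxind : \rank (M ^+ (mxind M).+1) = \rank (M ^+ mxind M).
Proof.
(* [find] would return [p.+1] if no [k <= p] qualified; then the ranks of
   [M ^+ 0], ..., [M ^+ p.+1] would decrease strictly from [p]. *)
rewrite /mxind; set P := (X in find X); have [hasP | /hasPn noP] := boolP (has P (iota 0 p.+1)).
  have := nth_find 0 hasP; rewrite nth_iota ?add0n => [/eqP //|].
  by move: hasP; rewrite has_find size_iota.
suff : forall j, (j <= p.+1)%N -> (\rank (M ^+ j) + j <= p)%N.
  by move/(_ p.+1 (leqnn _)); rewrite addnS ltnNge leq_addl.
elim=> [|j IH] le_jp; first by rewrite expr0 addn0 mxrank1.
have /eqP rank_drop : ~~ P j by apply: noP; rewrite mem_iota leq0n add0n.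
have := mxrankS (exprS_submx j); have := IH (ltnW le_jp); lia.
Qed.

Lemma eqmx_exprS_mxind k : (mxind M <= k)%N -> (M ^+ k.+1 :=: M ^+ k)%MS.
Proof.
move=> /subnKC <-; elim: (k - mxind M)%N => [|j IH].
  apply/eqmxP; rewrite addn0 exprS_submx /=.
  by rewrite -(mxrank_leqif_sup (exprS_submx _)).2 mxrank_exprS_mxind.
rewrite addnS [in X in (X :=: _)%MS]exprSr -mulmxE.
by apply: eqmx_trans (eqmxMr M IH) _; rewrite mulmxE -exprSr.
Qed.

Lemma eqmx_exprD_mxind k j : (mxind M <= k)%N -> (M ^+ (j + k) :=: M ^+ k)%MS.
Proof.
move=> le_ik; elim: j => [|j IH]; first by rewrite add0n.
apply: eqmx_trans IH; rewrite addSn; apply: eqmx_exprS_mxind.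
by rewrite (leq_trans le_ik) ?leq_addl.
Qed.

Lemma mxrank_exprD_mxind k j : (mxind M <= k)%N -> \rank (M ^+ (j + k)) = \rank (M ^+ k).
Proof. by move=> le_ik; rewrite (eqmx_exprD_mxind j le_ik). Qed.

Lemma mxind_tr : mxind M^T = mxind M.
Proof. by apply: eq_find => k /=; rewrite -!trmx_exp !mxrank_tr. Qed.

Lemma expr_mxind_mul_eq0 k j q (Z : 'M[F]_(p, q)) : (mxind M <= k)%N ->
  M ^+ j *m (M ^+ k *m Z) = 0 -> M ^+ k *m Z = 0.
Proof.
move=> le_ik MZ0; have /submxP [D ->] : (M ^+ k <= M ^+ (j + k))%MS.
  by rewrite (eqmx_exprD_mxind j le_ik).
by rewrite -mulmx_exprD -!mulmxA MZ0 mulmx0.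
Qed.

End MatrixIndex.

Lemma expr_mxind_range (F : fieldType) p (M : 'M[F]_p) k j :
  (mxind M <= k)%N -> exists D, M ^+ k = M ^+ (j + k) *m D.
Proof.
rewrite -mxind_tr => le_ik; have /submxP [D eD] : ((M ^+ k)^T <= (M ^+ (j + k))^T)%MS.
  by rewrite !trmx_exp (eqmx_exprD_mxind j le_ik).
by exists D^T; rewrite -[LHS]trmxK eD trmx_mul trmxK.
Qed.

Lemma mxrank_exprS_mulmxC (F : fieldType) m n (A : 'M[F]_(m, n)) (W : 'M[F]_(n, m)) j :
  (\rank ((A *m W) ^+ j.+1) <= \rank ((W *m A) ^+ j))%N.
Proof. by rewrite exprS_mulmx_push (leq_trans (mxrankM_maxl _ _)) ?mxrankM_maxr. Qed.

Section WeightedDrazin.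
Variables (F : fieldType) (m n : nat) (A : 'M[F]_(m, n)) (W : 'M[F]_(n, m)).
Local Notation M := (A *m W).
Local Notation Q := (W *m A).
Local Notation k := (wdind A W).

Lemma mxind_AW_le : (mxind M <= k)%N. Proof. exact: leq_maxl. Qed.
Lemma mxind_WA_le : (mxind Q <= k)%N. Proof. exact: leq_maxr. Qed.

Lemma mxrank_exprWA_wdind : \rank (Q ^+ k) = \rank (M ^+ k).
Proof.
apply/eqP; rewrite eqn_leq; apply/andP; split.
  by rewrite -(mxrank_exprD_mxind 1 mxind_WA_le) mxrank_exprS_mulmxC.
by rewrite -(mxrank_exprD_mxind 1 mxind_AW_le) mxrank_exprS_mulmxC.
Qed.

Lemma is_wdrazin_range X :
  M ^+ k.+2 *m X = M ^+ k *m A -> (exists Y, X = M ^+ k *m Y) -> is_wdrazin A W X.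
Proof.
move=> range_eq [Y eY]; have le_ik := mxind_AW_le; rewrite /is_wdrazin /=.
move: le_ik range_eq eY; move eAW : (A *m W) => AW le_ik range_eq eY.
have XW_eq : AW ^+ k.+1 *m X *m W = AW ^+ k.
  apply/eqP; rewrite -subr_eq0; apply/eqP.
  have AWXW : AW ^+ k *m (AW *m X *m W - 1%:M) = AW ^+ k.+1 *m X *m W - AW ^+ k.
    by rewrite mulmxBr mulmx1 !mulmxA mulmx_exprS.
  rewrite -AWXW; apply: (expr_mxind_mul_eq0 (j := 1)) le_ik _.
  rewrite AWXW expr1 mulmxBr !mulmxA !mulmx_exprSl range_eq.
  by rewrite -(mulmxA _ A W) eAW mulmx_exprS subrr.
have comm : AW *m X = X *m W *m A.
  apply/eqP; rewrite -subr_eq0; apply/eqP.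
  have AWX : AW ^+ k *m (AW *m Y - Y *m W *m A) = AW *m X - X *m W *m A.
    by rewrite eY mulmxBr !mulmxA mulmx_exprSl mulmx_exprS.
  rewrite -AWX; apply: (expr_mxind_mul_eq0 (j := k.+1)) le_ik _.
  by rewrite AWX mulmxBr !mulmxA mulmx_exprS range_eq XW_eq subrr.
split => //.
apply/eqP; rewrite -subr_eq0; apply/eqP.
have XWAWX : AW ^+ k *m (Y *m W *m A *m W *m X - Y) = X *m W *m A *m W *m X - X.
  by rewrite {2 4}eY mulmxBr !mulmxA.
rewrite -XWAWX; apply: (expr_mxind_mul_eq0 (j := k.+1)) le_ik _.
by rewrite XWAWX mulmxBr !mulmxA XW_eq -(mulmxA _ A W) eAW mulmx_exprS subrr.
Qed.

Lemma wdrazin_range X :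
  is_wdrazin A W X -> M ^+ k.+2 *m X = M ^+ k *m A /\ exists Y, X = M ^+ k *m Y.
Proof.
case=> XW_eq XWX_eq comm; split.
  by rewrite -mulmx_exprS -mulmxA comm !mulmxA XW_eq.
have sand : X = M *m X *m (W *m X) by rewrite -{1}XWX_eq -comm !mulmxA.
by exists (X *m (W *m X) ^+ k); rewrite mulmxA; apply: sandwich_expr.
Qed.

Lemma wdrazin_corange X :
  is_wdrazin A W X -> X *m Q ^+ k.+2 = A *m Q ^+ k /\ exists Y, X = Y *m Q ^+ k.
Proof.
move=> wdX; have [range_eq _] := wdrazin_range wdX; case: wdX => _ XWX_eq comm.
have XQ j : X *m Q ^+ j = M ^+ j *m X.
  elim: j => [|j IH]; first by rewrite !expr0 mul1mx mulmx1.
  by rewrite -!mulmx_exprS mulmxA IH -mulmxA (mulmxA X) -comm !mulmxA.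
split; first by rewrite XQ range_eq expr_mulmx_push.
have sand : X = X *m W *m X *m Q.
  by rewrite -[in LHS]XWX_eq -!mulmxA [A *m (W *m X)]mulmxA comm !mulmxA.
by exists ((X *m W) ^+ k *m X); apply: sandwich_expr.
Qed.

Lemma wdrazin_unique X1 X2 : is_wdrazin A W X1 -> is_wdrazin A W X2 -> X1 = X2.
Proof.
move=> /wdrazin_range [eq1 [Y1 eY1]] /wdrazin_range [eq2 [Y2 eY2]].
apply/eqP; rewrite -subr_eq0; apply/eqP.
have -> : X1 - X2 = M ^+ k *m (Y1 - Y2) by rewrite mulmxBr -eY1 -eY2.
apply: (expr_mxind_mul_eq0 (j := k.+2)) mxind_AW_le _.
by rewrite !mulmxBr -eY1 -eY2 eq1 eq2 subrr.
Qed.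

End WeightedDrazin.

Section Transposition.
Variable F : fieldType.

Lemma wdind_tr m n (A : 'M[F]_(m, n)) (W : 'M[F]_(n, m)) : wdind A^T W^T = wdind A W.
Proof. by rewrite /wdind -!trmx_mul !mxind_tr maxnC. Qed.

Lemma wdrazin_tr m n (A : 'M[F]_(m, n)) (W : 'M[F]_(n, m)) X :
  is_wdrazin A W X -> is_wdrazin A^T W^T X^T.
Proof.
move=> /wdrazin_corange [corange_eq [Y eY]].
apply: is_wdrazin_range; rewrite wdind_tr -trmx_mul -!trmx_exp.
  by rewrite -!trmx_mul corange_eq.
by exists Y^T; rewrite eY trmx_mul.
Qed.

Lemma pminor_tr p (K : 'M[F]_p) S : pminor K^T S = pminor K S.
Proof. by rewrite /pminor -det_tr; congr (\det _); apply/matrixP => s t; rewrite !mxE. Qed.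

Lemma pminor_sum_tr p (K : 'M[F]_p) r : pminor_sum K^T r = pminor_sum K r.
Proof. by apply: eq_bigr => S _; rewrite pminor_tr. Qed.

Definition rowrep_minor_mx p q (N : 'M[F]_p) r (B : 'M[F]_(q, p)) : 'M[F]_(q, p) :=
  \matrix_(i, j) \sum_(S : {set 'I_p} | (#|S| == r) && (j \in S)) pminor (rowrep N j (row i B)) S.

Lemma colrep_minor_mx_tr p q (N : 'M[F]_p) r (B : 'M[F]_(q, p)) :
  colrep_minor_mx N^T r B^T = (rowrep_minor_mx N r B)^T.
Proof.
apply/matrixP => i j; rewrite !mxE; apply: eq_bigr => S _.
by rewrite -pminor_tr; congr pminor; apply/matrixP => a b; rewrite !mxE.
Qed.

End Transposition.

Section DeterminantalRepresentation.
Variables (F : fieldType) (m n : nat) (A : 'M[F]_(m, n)) (W : 'M[F]_(n, m)).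
Local Notation k := (wdind A W).
Local Notation r := (\rank ((A *m W) ^+ k)).

Definition wdrazin_colrep : 'M[F]_(m, n) :=
  let N := (A *m W) ^+ k.+2 in
  (pminor_sum N r)^-1 *: colrep_minor_mx N r ((A *m W) ^+ k *m A).

Definition wdrazin_rowrep : 'M[F]_(m, n) :=
  let N := (W *m A) ^+ k.+2 in
  (pminor_sum N r)^-1 *: rowrep_minor_mx N r (A *m (W *m A) ^+ k).

Lemma is_wdrazin_colrep : is_wdrazin A W wdrazin_colrep.
Proof.
rewrite /wdrazin_colrep; set N := _ ^+ k.+2; set c := pminor_sum N r.
have le_ik := mxind_AW_le A W.
have rankN : \rank N = r by rewrite /N -add2n mxrank_exprD_mxind.
have rankN2 : \rank (N *m N) = \rank N.
  rewrite rankN /N mulmx_exprD (_ : (k.+2 + k.+2 = k.+4 + k)%N) ?mxrank_exprD_mxind //; lia.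
have c_neq0 : c != 0 by rewrite /c -rankN pminor_sum_rank_neq0.
have [D eD] := expr_mxind_range 2 le_ik; rewrite add2n in eD.
have rangeB : (A *m W) ^+ k *m A = N *m (D *m A) by rewrite mulmxA -eD.
apply: is_wdrazin_range.
  by rewrite -scalemxAr rangeB -rankN mulmx_colrep_minor_mx rankN scalerA mulVf ?scale1r.
rewrite rangeB -rankN colrep_minor_mx_range scalemxAr.
by rewrite /N -addn2 -mulmx_exprD -mulmxA; eexists.
Qed.

End DeterminantalRepresentation.

Lemma wdrazin_colrep_tr (F : fieldType) m n (A : 'M[F]_(m, n)) (W : 'M[F]_(n, m)) :
  wdrazin_colrep A^T W^T = (wdrazin_rowrep A W)^T.
Proof.
rewrite /wdrazin_colrep /wdrazin_rowrep wdind_tr -trmx_mul -!trmx_exp mxrank_tr.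
rewrite mxrank_exprWA_wdind -trmx_mul colrep_minor_mx_tr pminor_sum_tr.
by rewrite linearZ.
Qed.

Lemma is_wdrazin_rowrep (F : fieldType) m n (A : 'M[F]_(m, n)) (W : 'M[F]_(n, m)) :
  is_wdrazin A W (wdrazin_rowrep A W).
Proof.
by have := wdrazin_tr (is_wdrazin_colrep A^T W^T); rewrite wdrazin_colrep_tr !trmxK.
Qed.


Theorem theorem2p8 (R : realType) (m n : nat)
  (A : 'M[R[i]]_(m, n)) (W : 'M[R[i]]_(n, m)) :
  let k := wdind A W in
  let r := \rank ((A *m W) ^+ k) in
  (exists X, is_wdrazin A W X) /\
  forall X : 'M[R[i]]_(m, n), is_wdrazin A W X ->
  forall (i : 'I_m) (j : 'I_n),
    X i j =
      (\sum_(b : {set 'I_m} | (#|b| == r) && (i \in b))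
          pminor (colrep ((A *m W) ^+ k.+2) i (col j ((A *m W) ^+ k *m A))) b)
      / (\sum_(b : {set 'I_m} | #|b| == r) pminor ((A *m W) ^+ k.+2) b)
    /\
    X i j =
      (\sum_(a : {set 'I_n} | (#|a| == r) && (j \in a))
          pminor (rowrep ((W *m A) ^+ k.+2) j (row i (A *m (W *m A) ^+ k))) a)
      / (\sum_(a : {set 'I_n} | #|a| == r) pminor ((W *m A) ^+ k.+2) a).
Proof.
move=> k r; split; first by exists (wdrazin_colrep A W); apply: is_wdrazin_colrep.
move=> X wdX i j; split.
  by rewrite (wdrazin_unique wdX (is_wdrazin_colrep A W)) !mxE mulrC.
by rewrite (wdrazin_unique wdX (is_wdrazin_rowrep A W)) !mxE mulrC.
Qed.
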